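(* For any set of rule schemes $\mathcal{R}\subseteq\{N,H,P,F,wF\}$, every sequent derivable in $i\mathbf{STL}(\mathcal{R})$ is valid in every $\mathbf{K}(\mathcal{R})$-Kripke model.
   Context: Formulas of $\mathcal{L}_\nabla$ are built from variables and constants $1,\top,\bot$ by $\wedge,\vee,\otimes,\to$ and unary $\nabla$. Sequents $\Gamma\Rightarrow A$ have $\Gamma$ a finite sequence; $\nabla\Gamma$ applies $\nabla$ to each member. $\mathbf{STL}$ has axioms $A\Rightarrow A$, $\Rightarrow1$, $\nabla1\Rightarrow1$, $\Gamma\Rightarrow\top$, $\Gamma,\bot,\Sigma\Rightarrow A$ and rules (premises / conclusion): cut: $\Gamma\Rightarrow A$, $\Pi,A,\Sigma\Rightarrow B$ / $\Pi,\Gamma,\Sigma\Rightarrow B$; $L\wedge$: $\Gamma,A,\Sigma\Rightarrow C$ / $\Gamma,A\wedge B,\Sigma\Rightarrow C$ and $\Gamma,B,\Sigma\Rightarrow C$ / $\Gamma,A\wedge B,\Sigma\Rightarrow C$; $R\wedge$: $\Gamma\Rightarrow A$, $\Gamma\Rightarrow B$ / $\Gamma\Rightarrow A\wedge B$; $L\vee$: $\Gamma,A,\Sigma\Rightarrow C$, $\Gamma,B,\Sigma\Rightarrow C$ / $\Gamma,A\vee B,\Sigma\Rightarrow C$; $R\vee$: $\Gamma\Rightarrow A$ / $\Gamma\Rightarrow A\vee B$ and $\Gamma\Rightarrow B$ / $\Gamma\Rightarrow A\vee B$; $L1$: $\Gamma,\Sigma\Rightarrow A$ / $\Gamma,1,\Sigma\Rightarrow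 A$; $L\otimes$: $\Gamma,A,B,\Sigma\Rightarrow C$ / $\Gamma,A\otimes B,\Sigma\Rightarrow C$; $R\otimes$: $\Gamma\Rightarrow A$, $\Sigma\Rightarrow B$ / $\Gamma,\Sigma\Rightarrow A\otimes B$; $(\nabla)$: $A\Rightarrow B$ / $\nabla A\Rightarrow\nabla B$; Oplax: $\nabla A,\nabla B\Rightarrow C$ / $\nabla(A\otimes B)\Rightarrow C$; $L\to$: $\Gamma\Rightarrow A$, $\Pi,B,\Sigma\Rightarrow C$ / $\Pi,\Gamma,\nabla(A\to B),\Sigma\Rightarrow C$; $R\to$: $A,\nabla\Gamma\Rightarrow B$ / $\Gamma\Rightarrow A\to B$. Schemes: $(N)$: $\Gamma\Rightarrow A$ / $\nabla\Gamma\Rightarrow\nabla A$; $(P)$: $\Gamma\Rightarrow\nabla A$ / $\Gamma\Rightarrow A$; $(F)$: $\Gamma\Rightarrow A$ / $\Gamma\Rightarrow\nabla A$; $(wF)$: $\nabla A\Rightarrow\bot$ / $A\Rightarrow\bot$; $(H)$: $\Gamma,A_1\to B_1,\dots,A_n\to B_n\Rightarrow C$ / $\nabla\Gamma,\nabla A_1\to\nabla B_1,\dots,\nabla A_n\to\nabla B_n\Rightarrow\nabla C$. $i\mathbf{STL}(\mathcal{R})$ is $\mathbf{STL}$ plus the schemes in $\mathcal{R}$ plus left weakening, contraction and exchange. A Kripke model is $(W,\le,R,V)$: $(W,\le)$ a poset, $R\subseteq W\times W$ with $(u,v)\in R$, $u'\le u$, $v\le v'$ implying $(u',v')\in R$,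 and $V$ assigning an upset of $(W,\le)$ to each variable. Forcing: $w\Vdash p$ iff $w\in V(p)$; $w\Vdash\top$ and $w\Vdash1$ always; never $w\Vdash\bot$; $w\Vdash A\wedge B$ and $w\Vdash A\otimes B$ iff $w\Vdash A$ and $w\Vdash B$; $w\Vdash A\vee B$ iff $w\Vdash A$ or $w\Vdash B$; $w\Vdash A\to B$ iff for all $v$ with $(w,v)\in R$, $v\Vdash A$ implies $v\Vdash B$; $w\Vdash\nabla A$ iff there is $v$ with $(v,w)\in R$ and $v\Vdash A$. $\Gamma\Rightarrow A$ is valid if every $w$ forcing all members of $\Gamma$ forces $A$. A $\mathbf{K}(\mathcal{R})$-Kripke model satisfies the conditions for each scheme in $\mathcal{R}$: $(N)$: there is an order-preserving $\pi:W\to W$ with $(u,v)\in R$ iff $u\le\pi(v)$; $(H)$: such a $\pi$ exists and is an order isomorphism; $(P)$: $R\subseteq\le$; $(F)$: $R$ reflexive; $(wF)$: $R$ serial. *)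

From Stdlib Require Import List.
Import ListNotations.

Inductive form : Type :=
| Var : nat -> form
| One : form
| Top : form
| Bot : form
| And : form -> form -> form
| Or : form -> form -> form
| Tens : form -> form -> form
| Imp : form -> form -> form
| Nab : form -> form.

Definition nabla_ctx (G : list form) : list form := map Nab G.

Inductive scheme : Type := SN | SH | SP | SF | SwF.

Inductive derivable (Rs : scheme -> Prop) : list form -> form -> Prop :=
| ax_id : forall A, derivable Rs [A] A
| ax_one : derivable Rs [] One
| ax_nab_one : derivable Rs [Nab One] One
| ax_top : forall G, derivable Rs G Top
| ax_bot : forall G S A, derivable Rs (G ++ Bot :: S) A
| r_cut : forall G P S A B,
    derivable Rs G A -> derivable Rs (P ++ A :: S) B ->
    derivable Rs (P ++ G ++ S) B
| r_and_l1 : forall G S A B C,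
    derivable Rs (G ++ A :: S) C -> derivable Rs (G ++ And A B :: S) C
| r_and_l2 : forall G S A B C,
    derivable Rs (G ++ B :: S) C -> derivable Rs (G ++ And A B :: S) C
| r_and_r : forall G A B,
    derivable Rs G A -> derivable Rs G B -> derivable Rs G (And A B)
| r_or_l : forall G S A B C,
    derivable Rs (G ++ A :: S) C -> derivable Rs (G ++ B :: S) C ->
    derivable Rs (G ++ Or A B :: S) C
| r_or_r1 : forall G A B, derivable Rs G A -> derivable Rs G (Or A B)
| r_or_r2 : forall G A B, derivable Rs G B -> derivable Rs G (Or A B)
| r_one_l : forall G S A,
    derivable Rs (G ++ S) A -> derivable Rs (G ++ One :: S) A
| r_tens_l : forall G S A B C,
    derivable Rs (G ++ A :: B :: S) C -> derivable Rs (G ++ Tens A B :: S) C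
| r_tens_r : forall G S A B,
    derivable Rs G A -> derivable Rs S B -> derivable Rs (G ++ S) (Tens A B)
| r_nab : forall A B, derivable Rs [A] B -> derivable Rs [Nab A] (Nab B)
| r_oplax : forall A B C,
    derivable Rs [Nab A; Nab B] C -> derivable Rs [Nab (Tens A B)] C
| r_imp_l : forall G P S A B C,
    derivable Rs G A -> derivable Rs (P ++ B :: S) C ->
    derivable Rs (P ++ G ++ Nab (Imp A B) :: S) C
| r_imp_r : forall G A B,
    derivable Rs (A :: nabla_ctx G) B -> derivable Rs G (Imp A B)
| r_N : Rs SN -> forall G A,
    derivable Rs G A -> derivable Rs (nabla_ctx G) (Nab A)
| r_P : Rs SP -> forall G A, derivable Rs G (Nab A) -> derivable Rs G A
| r_F : Rs SF -> forall G A, derivable Rs G A -> derivable Rs G (Nab A)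
| r_wF : Rs SwF -> forall A, derivable Rs [Nab A] Bot -> derivable Rs [A] Bot
| r_H : Rs SH -> forall G (l : list (form * form)) C,
    derivable Rs (G ++ map (fun p => Imp (fst p) (snd p)) l) C ->
    derivable Rs (nabla_ctx G ++ map (fun p => Imp (Nab (fst p)) (Nab (snd p))) l)
              (Nab C)
| r_weak : forall G S B A,
    derivable Rs (G ++ S) A -> derivable Rs (G ++ B :: S) A
| r_contr : forall G S B A,
    derivable Rs (G ++ B :: B :: S) A -> derivable Rs (G ++ B :: S) A
| r_exch : forall G S B D A,
    derivable Rs (G ++ B :: D :: S) A -> derivable Rs (G ++ D :: B :: S) A.

Record kmodel : Type := KModel {
  W : Type;
  le : W -> W -> Prop;
  le_refl : forall u, le u u;
  le_trans : forall u v w, le u v -> le v w -> le u w;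
  le_antisym : forall u v, le u v -> le v u -> u = v;
  Rel : W -> W -> Prop;
  Rel_mono : forall u v u' v', Rel u v -> le u' u -> le v v' -> Rel u' v';
  V : nat -> W -> Prop;
  V_up : forall p u v, V p u -> le u v -> V p v
}.

Fixpoint forces (M : kmodel) (w : W M) (A : form) : Prop :=
  match A with
  | Var p => V M p w
  | One => True
  | Top => True
  | Bot => False
  | And B C => forces M w B /\ forces M w C
  | Or B C => forces M w B \/ forces M w C
  | Tens B C => forces M w B /\ forces M w C
  | Imp B C => forall v, Rel M w v -> forces M v B -> forces M v C
  | Nab B => exists v, Rel M v w /\ forces M v B
  end.

Definition valid (M : kmodel) (G : list form) (A : form) : Prop :=
  forall w : W M, (forall B, In B G -> forces M w B) -> forces M w A.

Definition order_preserving (M : kmodel) (f : W M -> W M) : Prop :=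
  forall u v, le M u v -> le M (f u) (f v).

Definition order_iso (M : kmodel) (f : W M -> W M) : Prop :=
  (forall u v, le M u v <-> le M (f u) (f v)) /\ (forall v, exists u, f u = v).

Definition scheme_cond (M : kmodel) (s : scheme) : Prop :=
  match s with
  | SN => exists pi : W M -> W M, order_preserving M pi /\
            forall u v, Rel M u v <-> le M u (pi v)
  | SH => exists pi : W M -> W M, order_preserving M pi /\ order_iso M pi /\
            forall u v, Rel M u v <-> le M u (pi v)
  | SP => forall u v, Rel M u v -> le M u v
  | SF => forall u, Rel M u u
  | SwF => forall u, exists v, Rel M u v
  end.

Definition K_model (Rs : scheme -> Prop) (M : kmodel) : Prop :=
  forall s, Rs s -> scheme_cond M s.

(* The scheme conditions are tailored to the
   schemes: under (N) the predecessors of [w] are the worlds below [pi w], so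
   [Nab A] holds at [w] iff [A] holds at [pi w]; under (H), with [pi] an order
   isomorphism, [Nab A -> Nab B] at [w] moreover gives [A -> B] at [pi w]. *)

From Stdlib Require Import List.
Import ListNotations.

Ltac ctx_split :=
  repeat rewrite ?Forall_app, ?Forall_cons_iff, ?Forall_nil_iff in *.

Section Semantics.

Variable M : kmodel.

Lemma forces_mono (A : form) (u v : W M) :
  forces M u A -> le M u v -> forces M v A.
Proof.
  revert u v; induction A; simpl; intros u v Hu Huv; try tauto.
  - eapply V_up; eauto.
  - destruct Hu; split; eauto.
  - destruct Hu; [left | right]; eauto.
  - destruct Hu; split; eauto.
  - intros x Hvx. apply Hu. eapply Rel_mono; eauto using le_refl.
  - destruct Hu as [x [Hxu Hx]].
    exists x; split; auto. eapply Rel_mono; eauto using le_refl.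
Qed.

Lemma forces_nab_rel (A : form) (u v : W M) :
  Rel M u v -> forces M u A -> forces M v (Nab A).
Proof. intros; exists u; auto. Qed.

Lemma forces_nab_imp (A B : form) (w : W M) :
  forces M w (Nab (Imp A B)) -> forces M w A -> forces M w B.
Proof. intros [v [Hvw HAB]] HA. exact (HAB w Hvw HA). Qed.

Section Adjoint.

Variable pi : W M -> W M.
Hypothesis Rel_pi : forall u v, Rel M u v <-> le M u (pi v).

Lemma forces_nab_pi (A : form) (w : W M) :
  forces M w (Nab A) <-> forces M (pi w) A.
Proof.
  split.
  - intros [v [Hvw Hv]]. apply Rel_pi in Hvw. eauto using forces_mono.
  - intros HA. exists (pi w); split; auto. apply Rel_pi, le_refl.
Qed.

Hypothesis pi_reflect : forall u v, le M (pi u) (pi v) -> le M u v.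
Hypothesis pi_surj : forall v, exists u, pi u = v.

Lemma forces_imp_nab_pi (A B : form) (w : W M) :
  forces M w (Imp (Nab A) (Nab B)) -> forces M (pi w) (Imp A B).
Proof.
  simpl; intros HAB v Hv HA.
  destruct (pi_surj v) as [v' <-].
  apply forces_nab_pi, HAB.
  - apply Rel_pi in Hv. apply Rel_pi, pi_reflect, Hv.
  - apply forces_nab_pi, HA.
Qed.

End Adjoint.

Lemma valid_Forall (G : list form) (A : form) :
  valid M G A <-> forall w, Forall (forces M w) G -> forces M w A.
Proof. unfold valid; setoid_rewrite Forall_forall; reflexivity. Qed.

Lemma valid_ctx_impl (G G' : list form) (A : form) :
  (forall w, Forall (forces M w) G -> Forall (forces M w) G') ->
  valid M G' A -> valid M G A.
Proof. rewrite !valid_Forall; auto. Qed.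

Lemma valid_incl (G G' : list form) (A : form) :
  incl G' G -> valid M G' A -> valid M G A.
Proof. intros Hincl HA w Hw. apply HA; auto. Qed.

Lemma valid_replace (G D S : list form) (X C : form) :
  (forall w, forces M w X -> Forall (forces M w) D) ->
  valid M (G ++ D ++ S) C -> valid M (G ++ X :: S) C.
Proof.
  intros HX; apply valid_ctx_impl; intros w Hw; ctx_split.
  intuition.
Qed.

Lemma valid_id (A : form) : valid M [A] A.
Proof. intros w Hw; apply Hw; left; reflexivity. Qed.

Lemma valid_one (G : list form) : valid M G One.
Proof. intros w _; exact I. Qed.

Lemma valid_top (G : list form) : valid M G Top.
Proof. intros w _; exact I. Qed.

Lemma valid_bot (G S : list form) (A : form) : valid M (G ++ Bot :: S) A.
Proof.
  intros w Hw; destruct (Hw Bot).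
  apply in_app_iff; right; left; reflexivity.
Qed.

Lemma valid_cut (G P S : list form) (A B : form) :
  valid M G A -> valid M (P ++ A :: S) B -> valid M (P ++ G ++ S) B.
Proof.
  rewrite valid_Forall; intros HA.
  apply valid_ctx_impl; intros w Hw; ctx_split; intuition.
Qed.

Lemma valid_and_l1 (G S : list form) (A B C : form) :
  valid M (G ++ A :: S) C -> valid M (G ++ And A B :: S) C.
Proof. apply (valid_replace G [A]); intros w [HA _]; auto. Qed.

Lemma valid_and_l2 (G S : list form) (A B C : form) :
  valid M (G ++ B :: S) C -> valid M (G ++ And A B :: S) C.
Proof. apply (valid_replace G [B]); intros w [_ HB]; auto. Qed.

Lemma valid_and_r (G : list form) (A B : form) :
  valid M G A -> valid M G B -> valid M G (And A B).
Proof. intros HA HB w Hw; split; auto. Qed.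

Lemma valid_or_l (G S : list form) (A B C : form) :
  valid M (G ++ A :: S) C -> valid M (G ++ B :: S) C ->
  valid M (G ++ Or A B :: S) C.
Proof.
  rewrite !valid_Forall; intros HA HB w Hw; ctx_split.
  destruct Hw as (HG & [Ha | Hb] & HS); [apply HA | apply HB]; ctx_split; tauto.
Qed.

Lemma valid_or_r1 (G : list form) (A B : form) :
  valid M G A -> valid M G (Or A B).
Proof. intros HA w Hw; left; auto. Qed.

Lemma valid_or_r2 (G : list form) (A B : form) :
  valid M G B -> valid M G (Or A B).
Proof. intros HB w Hw; right; auto. Qed.

Lemma valid_one_l (G S : list form) (A : form) :
  valid M (G ++ S) A -> valid M (G ++ One :: S) A.
Proof. apply (valid_replace G []); auto. Qed.

Lemma valid_tens_l (G S : list form) (A B C : form) :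
  valid M (G ++ A :: B :: S) C -> valid M (G ++ Tens A B :: S) C.
Proof. apply (valid_replace G [A; B]); intros w [HA HB]; auto. Qed.

Lemma valid_tens_r (G S : list form) (A B : form) :
  valid M G A -> valid M S B -> valid M (G ++ S) (Tens A B).
Proof.
  rewrite !valid_Forall; intros HA HB w Hw; ctx_split; simpl; intuition.
Qed.

Lemma valid_nab (A B : form) :
  valid M [A] B -> valid M [Nab A] (Nab B).
Proof.
  rewrite !valid_Forall; intros HB w Hw; ctx_split.
  destruct Hw as [[v [Hvw Hv]] _].
  exists v; split; auto.
Qed.

Lemma valid_oplax (A B C : form) :
  valid M [Nab A; Nab B] C -> valid M [Nab (Tens A B)] C.
Proof.
  apply (valid_replace [] [Nab A; Nab B] []).
  intros w [v [Hvw [HA HB]]]; eauto using forces_nab_rel.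
Qed.

Lemma valid_imp_l (G P S : list form) (A B C : form) :
  valid M G A -> valid M (P ++ B :: S) C ->
  valid M (P ++ G ++ Nab (Imp A B) :: S) C.
Proof.
  rewrite valid_Forall; intros HA.
  apply valid_ctx_impl; intros w Hw; ctx_split.
  intuition eauto using forces_nab_imp.
Qed.

Lemma valid_imp_r (G : list form) (A B : form) :
  valid M (A :: nabla_ctx G) B -> valid M G (Imp A B).
Proof.
  rewrite !valid_Forall; intros HB w HG v Hwv HA.
  apply HB; constructor; auto.
  unfold nabla_ctx; rewrite Forall_map.
  eapply Forall_impl; [|exact HG]; eauto using forces_nab_rel.
Qed.

(* Soundness does not use the monotonicity of [pi] required by (N) and (H). *)
Lemma valid_N (G : list form) (A : form) :
  scheme_cond M SN -> valid M G A -> valid M (nabla_ctx G) (Nab A).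
Proof.
  intros [pi [_ Rel_pi]]; rewrite !valid_Forall; intros HA w Hw.
  unfold nabla_ctx in Hw; rewrite Forall_map in Hw.
  apply (forces_nab_pi pi Rel_pi), HA.
  eapply Forall_impl; [|exact Hw]; intro; apply (forces_nab_pi pi Rel_pi).
Qed.

Lemma valid_P (G : list form) (A : form) :
  scheme_cond M SP -> valid M G (Nab A) -> valid M G A.
Proof.
  intros Rel_le HA w Hw. destruct (HA w Hw) as [v [Hvw Hv]].
  eauto using forces_mono.
Qed.

Lemma valid_F (G : list form) (A : form) :
  scheme_cond M SF -> valid M G A -> valid M G (Nab A).
Proof. intros Rel_refl HA w Hw. eauto using forces_nab_rel. Qed.

Lemma valid_wF (A : form) :
  scheme_cond M SwF -> valid M [Nab A] Bot -> valid M [A] Bot.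
Proof.
  intros Rel_serial; rewrite !valid_Forall; intros HA w Hw; ctx_split.
  destruct (Rel_serial w) as [v Hwv].
  apply (HA v); ctx_split; intuition eauto using forces_nab_rel.
Qed.

Lemma valid_H (G : list form) (l : list (form * form)) (C : form) :
  scheme_cond M SH ->
  valid M (G ++ map (fun p => Imp (fst p) (snd p)) l) C ->
  valid M (nabla_ctx G ++ map (fun p => Imp (Nab (fst p)) (Nab (snd p))) l)
    (Nab C).
Proof.
  intros [pi [_ [[pi_iso pi_surj] Rel_pi]]].
  rewrite !valid_Forall; intros HC w Hw.
  unfold nabla_ctx in Hw; rewrite Forall_app, !Forall_map in Hw.
  destruct Hw as [HG Hl].
  apply (forces_nab_pi pi Rel_pi), HC; rewrite Forall_app, Forall_map; split.
  - eapply Forall_impl; [|exact HG]; intro; apply (forces_nab_pi pi Rel_pi).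
  - eapply Forall_impl; [|exact Hl]; intro.
    apply forces_imp_nab_pi; auto. intros u v; apply pi_iso.
Qed.

Lemma valid_weak (G S : list form) (B A : form) :
  valid M (G ++ S) A -> valid M (G ++ B :: S) A.
Proof. apply valid_incl; intro; rewrite !in_app_iff; simpl; tauto. Qed.

Lemma valid_contr (G S : list form) (B A : form) :
  valid M (G ++ B :: B :: S) A -> valid M (G ++ B :: S) A.
Proof. apply valid_incl; intro; rewrite !in_app_iff; simpl; tauto. Qed.

Lemma valid_exch (G S : list form) (B D A : form) :
  valid M (G ++ B :: D :: S) A -> valid M (G ++ D :: B :: S) A.
Proof. apply valid_incl; intro; rewrite !in_app_iff; simpl; tauto. Qed.

End Semantics.

Theorem theorem8p5 :
  forall (Rs : scheme -> Prop) (G : list form) (A : form),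
    derivable Rs G A ->
    forall M : kmodel, K_model Rs M -> valid M G A.
Proof.
  intros Rs G A D M KM; unfold K_model in KM.
  induction D;
    eauto using valid_id, valid_one, valid_top, valid_bot, valid_cut,
      valid_and_l1, valid_and_l2, valid_and_r, valid_or_l, valid_or_r1,
      valid_or_r2, valid_one_l, valid_tens_l, valid_tens_r, valid_nab,
      valid_oplax, valid_imp_l, valid_imp_r, valid_N, valid_P, valid_F,
      valid_wF, valid_H, valid_weak, valid_contr, valid_exch.
Qed.
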